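(* For every finite simple undirected graph $G$, $\dim(\mathrm{TECSP}(G)) = |\mathrm{CP}(G)|$.
   Context: All graphs are finite, simple and undirected. For $\emptyset\subsetneq S\subsetneq V(G)$, $\delta(S)$ denotes the set of edges of $G$ with exactly one endpoint in $S$; such a set is called a cut, and a cut with $k$ edges is a $k$-cut. An edge $e$ is a bridge if $\{e\}=\delta(S)$ for some $S$. A graph is $2$-edge-connected if it is connected and has no bridges (equivalently, any two distinct vertices are joined by two edge-disjoint paths); the empty graph and a single vertex are $2$-edge-connected. For a subgraph $H\subseteq G$, $\chi^H\in\{0,1\}^{E(G)}$ is the incidence vector of $E(H)$. The $2$-edge-connected subgraph polytope is $\mathrm{TECSP}(G)=\mathrm{conv}\{\chi^H : H\subseteq G \text{ is } 2\text{-edge-connected}\}\subseteq\mathbb{R}^{E(G)}$. Two distinct edges $e,f$ are coparallel if $\{e,f\}$ is an inclusion-wise minimal cut of $G$. A coparallel class is an inclusion-wise maximal set $C$ of non-bridge edges such that every two distinct elements of $C$ are coparallel; in particular a non-bridge edge contained in no $2$-cut forms a singleton coparallel class, and bridges lie in no coparallel class. $\mathrm{CP}(G)$ is the set of coparallel classes of $G$. *)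

From HB Require Import structures.
From mathcomp Require Import all_boot all_order all_algebra.
Set Implicit Arguments. Unset Strict Implicit. Unset Printing Implicit Defensive.
Import Order.TTheory GRing.Theory Num.Theory.
Local Open Scope ring_scope.

(* A finite simple undirected graph G is given by a finite vertex type V and a
   symmetric irreflexive adjacency relation e.  An edge is the 2-element
   vertex set {x,y}. *)

Section Graphs.
Variable V : finType.

Definition edges (e : rel V) : {set {set V}} :=
  [set [set p.1; p.2] | p : V * V & e p.1 p.2].

Definition delta (F : {set {set V}}) (S : {set V}) : {set {set V}} :=
  [set f in F | #|f :&: S| == 1%N].

Definition is_cut (e : rel V) (D : {set {set V}}) : bool :=
  [exists S : {set V}, [&& S != set0, S != setT & D == delta (edges e) S]].

Definition is_bridge (e : rel V) (f : {set V}) : bool :=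
  is_cut e [set f].

Definition is_min_cut (e : rel V) (D : {set {set V}}) : bool :=
  [&& is_cut e D, D != set0 &
      [forall D' : {set {set V}}, ((D' \proper D) && (D' != set0)) ==> ~~ is_cut e D']].

Definition coparallel (e : rel V) (f g : {set V}) : bool :=
  (f != g) && is_min_cut e [set f; g].

Definition copar_set (e : rel V) (C : {set {set V}}) : bool :=
  [&& C != set0, C \subset edges e,
      [forall f in C, ~~ is_bridge e f] &
      [forall f in C, forall g in C, (f != g) ==> coparallel e f g]].

Definition CP (e : rel V) : {set {set {set V}}} :=
  [set C | maxset (copar_set e) C].

Definition is_subgraph (e : rel V) (W : {set V}) (F : {set {set V}}) : bool :=
  (W \subset [set: V]) && (F \subset edges e) && [forall f in F, f \subset W].

Definition connectedH (W : {set V}) (F : {set {set V}}) : Prop :=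
  forall x y, x \in W -> y \in W -> connect (fun a b => [set a; b] \in F) x y.

Definition is_bridgeH (W : {set V}) (F : {set {set V}}) (f : {set V}) : bool :=
  [exists S : {set V},
     [&& S \subset W, S != set0, S != W & delta F S == [set f]]].

Definition two_edge_connected (W : {set V}) (F : {set {set V}}) : Prop :=
  connectedH W F /\ (forall f, f \in F -> ~~ is_bridgeH W F f).

End Graphs.

Section Polytopes.
Variable R : realFieldType.
Variable V : finType.

(* R^{E(G)} is represented inside R^{2-subsets}: coordinates outside E(G) are
   zero for all points considered, which does not affect affine dimension. *)
Local Notation vec := {ffun {set V} -> R^o}.

Definition incidence (F : {set {set V}}) : vec :=
  [ffun f => if f \in F then 1 else 0].

Definition tecs_point (e : rel V) (x : vec) : Prop :=
  exists (W : {set V}) (F : {set {set V}}),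
    [/\ is_subgraph e W F, two_edge_connected W F & x = incidence F].

Definition conv (P : vec -> Prop) (x : vec) : Prop :=
  exists (n : nat) (p : 'I_n -> vec) (lam : 'I_n -> R),
    [/\ forall i, P (p i), forall i, 0 <= lam i, \sum_i lam i = 1
      & x = \sum_i lam i *: p i].

Definition TECSP (e : rel V) : vec -> Prop := conv (tecs_point e).

Definition aff_indep (n : nat) (p : 'I_n -> vec) : Prop :=
  forall lam : 'I_n -> R, \sum_i lam i = 0 -> \sum_i lam i *: p i = 0 ->
    forall i, lam i = 0.

Definition has_dim (X : vec -> Prop) (d : nat) : Prop :=
  (exists p : 'I_d.+1 -> vec, aff_indep p /\ forall i, X (p i)) /\
  (forall (m : nat) (p : 'I_m -> vec), aff_indep p -> (forall i, X (p i)) ->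
     (m <= d.+1)%N).

End Polytopes.

From mathcomp Require Import all_boot all_order all_algebra.
Set Implicit Arguments. Unset Strict Implicit. Unset Printing Implicit Defensive.
Import Order.TTheory GRing.Theory Num.Theory.

(* Call f a bridge of an edge set X if {f} = delta_X(S) for some S. Cuts are
   closed under symmetric difference, and this drives everything: the
   coparallel classes partition the non-bridges of G, and a 2-edge-connected
   subgraph meeting a class contains all of it (otherwise a cut would meet the
   subgraph in a single edge), so every point of TECSP(G) lies in the span of
   the |CP(G)| class vectors. Conversely, for X a subset of E(G), the
   non-bridges of X split into the edge sets of 2-edge-connected components,
   and deleting a class C from E(G) deletes exactly C from the non-bridges;
   hence chi^C = chi^N(E) - chi^N(E \ C) is a combination of points of
   TECSP(G). The class vectors being independent, 0 together with |CP(G)|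
   independent points of TECSP(G) are affinely independent. *)

Definition symd (T : finType) (A B : {set T}) := (A :\: B) :|: (B :\: A).

Lemma in_symd (T : finType) (A B : {set T}) x : (x \in symd A B) = (x \in A) (+) (x \in B).
Proof. by rewrite !inE; case: (x \in A); case: (x \in B). Qed.

Section Cuts.
Variable V : finType.
Implicit Types (B F X : {set {set V}}) (f g : {set V}) (S T W : {set V}).

Definition pair_edges F := forall f, f \in F -> #|f| == 2.

Lemma pair_edgesS F' F : F' \subset F -> pair_edges F -> pair_edges F'.
Proof. by move=> /subsetP sF pF f /sF /pF. Qed.

Lemma cards2I a b S : a != b -> #|[set a; b] :&: S| = (a \in S) + (b \in S).
Proof.
move=> ab; rewrite -sum1_card.
rewrite (eq_bigl (fun x => (x \in [set a; b]) && (x \in S))) => [|x]; last by rewrite inE.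
by rewrite big_mkcondr /= big_setU1 ?inE // big_set1.
Qed.

Lemma cards2I_eq1 a b S : a != b ->
  (#|[set a; b] :&: S| == 1) = (a \in S) (+) (b \in S).
Proof. by move=> ab; rewrite cards2I //; case: (a \in S); case: (b \in S). Qed.

Lemma delta_sub F S : delta F S \subset F.
Proof. by apply/subsetP => f; rewrite inE => /andP[]. Qed.

Lemma delta_restrict F' F S : F' \subset F -> delta F' S = delta F S :&: F'.
Proof.
move=> /subsetP sF; apply/setP => f; rewrite !inE [RHS]andbC.
by case fF: (f \in F') => //=; rewrite sF.
Qed.

Lemma delta_symd F S T : pair_edges F ->
  delta F (symd S T) = symd (delta F S) (delta F T).
Proof.
move=> pF; apply/setP => f; rewrite in_symd !inE.
case fF: (f \in F) => //=; have /cards2P[a [b [ab ->]]] := pF f fF.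
rewrite !cards2I_eq1 // !in_symd.
by case: (a \in S); case: (a \in T); case: (b \in S); case: (b \in T).
Qed.

Lemma delta_covering F W : pair_edges F -> {in F, forall f, f \subset W} ->
  delta F W = set0.
Proof.
move=> pF sW; apply/setP => f; rewrite !inE.
case fF: (f \in F) => //=; have := sW f fF.
have /cards2P[a [b [ab ->]]] := pF f fF.
by rewrite subUset !sub1set cards2I_eq1 // => /andP[-> ->].
Qed.

Lemma delta_set0 F : pair_edges F -> delta F set0 = set0.
Proof.
move=> pF; apply/setP => f; rewrite !inE.
case fF: (f \in F) => //=; have /cards2P[a [b [ab ->]]] := pF f fF.
by rewrite cards2I_eq1 // !inE.
Qed.

(* Unlike [is_bridge], no condition on [S] is needed: [delta X set0] and
   [delta X setT] are empty. *)
Definition bridgeb X f := [exists S, delta X S == [set f]].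
Definition nonbridges X := [set f in X | ~~ bridgeb X f].

Lemma bridgebP X f : reflect (exists S, delta X S = [set f]) (bridgeb X f).
Proof. by apply: (iffP existsP) => -[S /eqP]; exists S. Qed.

Lemma nonbridgesP X f :
  reflect (f \in X /\ forall S, delta X S <> [set f]) (f \in nonbridges X).
Proof.
rewrite inE; apply: (iffP andP) => -[fX nb]; split=> //.
  by move=> S dS; case/negP: nb; apply/bridgebP; exists S.
by apply/bridgebP => -[S /nb].
Qed.

Lemma nonbridges_sub X : nonbridges X \subset X.
Proof. by apply/subsetP => f /nonbridgesP[]. Qed.

(* Cuts are closed under symmetric difference, so the bridges in a cut can be
   cancelled one by one. *)
Lemma bridgeb_cutU X B S f : pair_edges X -> {in B, forall g, bridgeb X g} ->
  f \notin B -> delta X S = f |: B -> bridgeb X f.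
Proof.
move=> pX; have [n leBn] := ubnP #|B|; elim: n B S leBn => // n IHn B S leBn bB fB dS.
have [B0|[g gB]] := set_0Vmem B.
  by apply/bridgebP; exists S; rewrite dS B0 setU0.
have /bridgebP[T dT] := bB g gB.
apply: (IHn (B :\ g) (symd S T)).
- by rewrite (cardsD1 g B) gB in leBn.
- by move=> h /setD1P[_ /bB].
- by rewrite !inE negb_and fB orbT.
rewrite delta_symd // dS dT; apply/setP => x; rewrite in_symd !inE.
have [->|xg] := eqVneq x g; last by rewrite addbF.
by rewrite gB andbT; case: eqVneq fB => // <-; rewrite gB.
Qed.

Lemma is_bridgeH_delta W F S f : pair_edges F -> {in F, forall g, g \subset W} ->
  delta F S = [set f] -> is_bridgeH W F f.
Proof.
move=> pF sW dS.
have dSW : delta F (S :&: W) = [set f].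
  rewrite -dS; apply/setP => g; rewrite !inE.
  case gF: (g \in F) => //=; have := sW g gF.
  have /cards2P[a [b [ab ->]]] := pF g gF.
  by rewrite subUset !sub1set !cards2I_eq1 // !inE => /andP[-> ->]; rewrite !andbT.
apply/existsP; exists (S :&: W); rewrite subsetIr dSW eqxx andbT /=.
have f0 : [set f] != set0 by apply/set0Pn; exists f; rewrite set11.
apply/andP; split; apply: contra_neq f0 => SW; rewrite -dSW SW.
  exact: delta_set0.
exact: delta_covering.
Qed.

End Cuts.

Section Components.
Variables (V : finType) (X : {set {set V}}).
Hypothesis pX : pair_edges X.
Implicit Types (f : {set V}) (K S : {set V}).

Definition nonbridge_adj : rel V := fun a b => [set a; b] \in nonbridges X.

Lemma nonbridge_adj_sym : symmetric nonbridge_adj.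
Proof. by move=> a b; rewrite /nonbridge_adj setUC. Qed.

Definition component x := [set y | connect nonbridge_adj x y].
Definition component_edges K := [set f in nonbridges X | f \subset K].

Lemma component_refl x : x \in component x.
Proof. by rewrite inE connect0. Qed.

Lemma component_eq x a : a \in component x -> component a = component x.
Proof.
rewrite inE => xa; apply/setP => y; rewrite !inE.
by rewrite (same_connect (sym_connect_sym nonbridge_adj_sym) xa).
Qed.

Lemma component_nonbridge x f a : f \in nonbridges X -> a \in f ->
  a \in component x -> f \subset component x.
Proof.
move=> fN; have /cards2P[u [v [uv ef]]] := pX (subsetP (nonbridges_sub X) f fN).
have adj b c : b \in component x -> nonbridge_adj b c -> c \in component x.
  by rewrite !inE => xb bc; apply: connect_trans xb (connect1 bc).
subst f; rewrite subUset !sub1set => /set2P[]-> aK; rewrite aK.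
  by rewrite (adj u).
by rewrite (adj v) // nonbridge_adj_sym.
Qed.

Lemma component_edges_connected x :
  connectedH (component x) (component_edges (component x)).
Proof.
set K := component x; set r := fun a b => [set a; b] \in component_edges K.
have r_sym : symmetric r by move=> a b; rewrite /r setUC.
have adj_r : {in K &, subrel nonbridge_adj r}.
  by move=> a b aK bK ab; rewrite /r inE -/(nonbridge_adj a b) ab subUset !sub1set aK bK.
suff xr y : y \in K -> connect r x y.
  move=> y z /xr xy /xr xz.
  by apply: connect_trans xz; rewrite (sym_connect_sym r_sym).
rewrite inE => /connectP[p xp ->]; apply/connectP; exists p => //.
apply: (sub_in_path adj_r) (xp); apply/allP => z /(path_connect xp) xz.
by suff: z \in K by []; rewrite inE.
Qed.

Lemma component_edges_bridgeless x f :
  f \in component_edges (component x) ->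
  ~~ is_bridgeH (component x) (component_edges (component x)) f.
Proof.
set K := component x; set FK := component_edges K.
have sFK : FK \subset X.
  by apply/subsetP => g; rewrite inE => /andP[/(subsetP (nonbridges_sub X))].
rewrite inE => /andP[fN _]; apply/negP => /existsP[S /and4P[sSK _ _ /eqP dS]].
have dX : delta FK S = delta X S :&: FK by apply: delta_restrict.
move: (fN); rewrite inE => /andP[_ /negP]; apply.
apply: (bridgeb_cutU (B := delta X S :\ f) (S := S)) => //.
- move=> g /setD1P[gf gd]; case: (boolP (bridgeb X g)) => // ngb.
  have gX := subsetP (delta_sub X S) g gd.
  have gN : g \in nonbridges X by rewrite inE gX ngb.
  have [a gSa] : exists a, g :&: S = [set a].
    by apply/cards1P; move: gd; rewrite inE => /andP[].
  have /setIP[ag aS] : a \in g :&: S by rewrite gSa set11.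
  have gFK : g \in FK.
    by rewrite inE gN (component_nonbridge gN ag) ?(subsetP sSK).
  have : g \in delta FK S by rewrite dX inE gd gFK.
  by rewrite dS inE (negbTE gf).
- by rewrite !inE eqxx.
- rewrite setD1K //; have : f \in delta FK S by rewrite dS set11.
  by rewrite dX => /setIP[].
Qed.
End Components.

Section CoparallelClasses.
Variables (V : finType) (e : rel V).
Hypothesis e_irr : irreflexive e.
Local Notation E := (edges e).
Implicit Types (C D F : {set {set V}}) (f g h : {set V}) (S T W : {set V}).

Lemma edges_pairs : pair_edges E.
Proof.
move=> f /imsetP[[a b]]; rewrite inE /= => ab ->; rewrite cards2.
by have [ba|] := eqVneq a b; first by rewrite ba e_irr in ab.
Qed.

Lemma is_subgraphP W F :
  reflect (F \subset E /\ {in F, forall f, f \subset W}) (is_subgraph e W F).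
Proof.
rewrite /is_subgraph subsetT /=.
by apply: (iffP andP) => -[sFE /forall_inP sW].
Qed.

Lemma is_cut_delta S : delta E S != set0 -> is_cut e (delta E S).
Proof.
move=> dS; apply/existsP; exists S; rewrite eqxx andbT.
apply/andP; split; apply: contra_neq dS => ->.
  exact: delta_set0 edges_pairs.
by apply: delta_covering edges_pairs _ => f _; apply: subsetT.
Qed.

Lemma is_cutP D : is_cut e D -> exists S, D = delta E S.
Proof. by case/existsP => S /and3P[_ _ /eqP ->]; exists S. Qed.

Lemma is_bridgeE f : is_bridge e f = bridgeb E f.
Proof.
apply/idP/bridgebP => [/is_cutP[S dS]|[S dS]]; first by exists S.
by rewrite /is_bridge -dS is_cut_delta // dS; apply/set0Pn; exists f; rewrite set11.
Qed.

Lemma coparallelP f g : reflect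
  [/\ f != g, f \in nonbridges E, g \in nonbridges E
    & exists S, delta E S = [set f; g]]
  (coparallel e f g).
Proof.
apply: (iffP andP) => [[fg /and3P[/is_cutP[S dS] _ minD]]|[fg fN gN [S dS]]].
  have nb h : h \in [set f; g] -> h \in nonbridges E.
    move=> hfg; apply/nonbridgesP; split.
      by apply: (subsetP (delta_sub E S)); rewrite -dS.
    move=> T dT; have h0 : [set h] != set0 by apply/set0Pn; exists h; rewrite set11.
    have hcut : is_cut e [set h] by rewrite -dT is_cut_delta // dT.
    have hprop : [set h] \proper [set f; g].
      rewrite properEneq sub1set hfg andbT; apply: contra_neq fg => /setP eqh.
      move: (eqh f) (eqh g); rewrite !inE !eqxx orbT /= => fh gh.
      by rewrite (eqP fh) (eqP gh).
    by move: (forallP minD [set h]); rewrite hprop h0 hcut.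
  by split=> //; [apply: nb; rewrite set21 | apply: nb; rewrite set22 | exists S].
split=> //; rewrite /is_min_cut -dS is_cut_delta; last first.
  by rewrite dS; apply/set0Pn; exists f; rewrite set21.
rewrite dS /=; apply/andP; split; first by apply/set0Pn; exists f; rewrite set21.
apply/forallP => D; apply/implyP => /andP[pD D0]; apply/negP => /is_cutP[T dT].
have /cards1P[h eD] : #|D| == 1.
  move: (proper_card pD) D0; rewrite cards2 fg -card_gt0.
  by case: #|D| => [|[|]].
have : h \in [set f; g] by apply: (subsetP (proper_sub pD)); rewrite eD set11.
by case/set2P=> eh; subst h;
  [case/nonbridgesP: fN | case/nonbridgesP: gN] => _ /(_ T); rewrite -dT eD.
Qed.

Lemma coparallel_sym f g : coparallel e f g = coparallel e g f.
Proof. by rewrite /coparallel setUC eq_sym. Qed.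

Lemma coparallel_trans f g h : f != h ->
  coparallel e f g -> coparallel e g h -> coparallel e f h.
Proof.
move=> fh /coparallelP[fg fN _ [S dS]] /coparallelP[gh _ hN [T dT]].
apply/coparallelP; split=> //; exists (symd S T).
rewrite delta_symd ?dS ?dT; last exact: edges_pairs.
apply/setP => x; rewrite in_symd !inE.
have [->|xf] := eqVneq x f; first by rewrite (negbTE fg) (negbTE fh).
by have [->|xg] := eqVneq x g; rewrite ?(negbTE gh) //= addbF.
Qed.

Lemma copar_setP C : reflect
  [/\ C != set0, C \subset nonbridges E
    & {in C &, forall f g, f != g -> coparallel e f g}]
  (copar_set e C).
Proof.
apply: (iffP and4P) => [[C0 sCE /forall_inP nbC /forall_inP pwC]|[C0 sCN pwC]].
  split=> //; last by move=> f g fC gC; move/forall_inP/(_ g gC)/implyP: (pwC f fC).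
  apply/subsetP => f fC; rewrite inE (subsetP sCE) //=.
  by rewrite -is_bridgeE nbC.
split=> //.
- exact: subset_trans sCN (nonbridges_sub E).
- by apply/forall_inP => f /(subsetP sCN); rewrite inE is_bridgeE => /andP[].
- by apply/forall_inP => f fC; apply/forall_inP => g gC; apply/implyP; apply: pwC.
Qed.

Lemma CP_class C : C \in CP e -> [/\ C != set0, C \subset nonbridges E
  & {in C &, forall f g, f != g -> coparallel e f g}].
Proof. by rewrite inE => /maxsetp/copar_setP. Qed.

Lemma CP_coparallel_closed C f g : C \in CP e -> g \in C -> coparallel e f g -> f \in C.
Proof.
move=> CC gC fg; have [_ sCN pwC] := CP_class CC.
have fN : f \in nonbridges E by case/coparallelP: fg.
have fx x : x \in C -> f != x -> coparallel e f x.
  move=> xC fx; have [<-|gx] := eqVneq g x; first by [].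
  exact: coparallel_trans fx fg (pwC g x gC xC gx).
have cfC : copar_set e (f |: C).
  apply/copar_setP; split.
  - by apply/set0Pn; exists f; rewrite setU11.
  - by rewrite subUset sub1set fN sCN.
  - move=> x y /setU1P[->|xC] /setU1P[->|yC] xy.
    + by rewrite eqxx in xy.
    + exact: fx.
    + by rewrite coparallel_sym; apply: fx; rewrite // eq_sym.
    + exact: pwC.
by rewrite inE in CC; rewrite -(maxsetsup CC cfC (subsetUr _ _)) setU11.
Qed.

Lemma CP_partition : partition (CP e) (nonbridges E).
Proof.
apply/and3P; split.
- rewrite eqEsubset; apply/andP; split.
    by apply/bigcupsP => C /CP_class[].
  apply/subsetP => f fN.
  have cf : copar_set e [set f].
    apply/copar_setP; split.
    - by apply/set0Pn; exists f; rewrite set11.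
    - by rewrite sub1set.
    - by move=> x y /set1P-> /set1P->; rewrite eqxx.
  have [C CC sfC] := maxset_exists cf.
  by apply/bigcupP; exists C; rewrite ?inE // -sub1set.
- apply/trivIsetP => C1 C2 C1C C2C; apply: contraR.
  rewrite -setI_eq0 => /set0Pn[f /setIP[fC1 fC2]].
  have sub A B : A \in CP e -> B \in CP e -> f \in A -> f \in B -> B \subset A.
    move=> AC BC fA fB; apply/subsetP => g gB; have [->|gf] := eqVneq g f; first by [].
    by apply: (CP_coparallel_closed AC fA); have [_ _ pw] := CP_class BC; apply: pw.
  by rewrite eqEsubset !sub.
- by apply/negP => /CP_class[]; rewrite eqxx.
Qed.

(* Coparallel pairs inside [D] are cancelled two at a time; a last lone
   partner of [f] would be coparallel to it. *)
Lemma delta_neq_class_setU1 C D S f : C \in CP e -> f \in nonbridges E ->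
  f \notin C -> D \subset C -> delta E S != f |: D.
Proof.
move=> CC fN fC; have [_ sCN pwC] := CP_class CC.
have [n leDn] := ubnP #|D|; elim: n D S leDn => // n IHn D S leDn sDC.
apply/eqP => dS; have [D0|[g gD]] := set_0Vmem D.
  by case/nonbridgesP: fN => _ /(_ S); rewrite dS D0 setU0.
have gC := subsetP sDC g gD.
have fg : f != g by apply: contraNneq fC => ->.
have [Dg0|[h /setD1P[hg hD]]] := set_0Vmem (D :\ g).
  have eD : D = [set g] by rewrite -(setD1K gD) Dg0 setU0.
  case/negP: fC; apply: (CP_coparallel_closed CC gC); apply/coparallelP.
  by split=> //; [apply: (subsetP sCN) | exists S; rewrite dS eD].
have hC := subsetP sDC h hD.
have gh : g != h by rewrite eq_sym.
have /coparallelP[_ _ _ [T dT]] := pwC g h gC hC gh.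
suff dST : delta E (symd S T) = f |: (D :\: [set g; h]).
  move/eqP: dST; apply/negP; apply: IHn; last exact: subset_trans (subsetDl _ _) sDC.
  have ltD : #|D :\: [set g; h]| < #|D|.
    apply: proper_card; rewrite properEneq subsetDl andbT.
    by apply/eqP => /setP/(_ g); rewrite !inE gD eqxx.
  by apply: leq_trans ltD _; rewrite -ltnS.
rewrite delta_symd ?dS ?dT; last exact: edges_pairs.
apply/setP => x; rewrite in_symd !inE.
have [->|xf] := eqVneq x f.
  have fh : f != h by apply: contraNneq fC => ->.
  by rewrite (negbTE fg) (negbTE fh).
have [->|xg] := eqVneq x g; first by rewrite gD.
by have [->|xh] := eqVneq x h; rewrite ?hD //= addbF.
Qed.

Lemma nonbridges_setD_class C : C \in CP e ->
  nonbridges (E :\: C) = nonbridges E :\: C.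
Proof.
move=> CC; have sEC : E :\: C \subset E := subsetDl E C.
apply/setP => f; rewrite [RHS]inE; apply/idP/andP => [fNC|[fC fN]].
  have /setDP[fE fC] := subsetP (nonbridges_sub _) f fNC.
  split=> //; apply/nonbridgesP; split=> // S dS.
  case/nonbridgesP: fNC => _ /(_ S); rewrite (delta_restrict _ sEC) dS.
  by apply; apply/setIidPl; rewrite sub1set inE fC.
have fE : f \in E by case/nonbridgesP: fN.
apply/nonbridgesP; split=> [|S dS]; first by rewrite inE fC.
apply: (negP (delta_neq_class_setU1 S CC fN fC (subsetIr (delta E S) C))).
apply/eqP/setP => g; rewrite in_setU1 in_setI.
have := congr1 (fun F => g \in F) dS.
rewrite (delta_restrict _ sEC) /= in_setI in_setD in_set1.
case gd: (g \in delta E S); last by move=> /= <-.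
by rewrite (subsetP (delta_sub E S) g gd) andbT; case: (g \in C); case: (g == f).
Qed.

Lemma two_edge_connected_delta W F S f : is_subgraph e W F ->
  two_edge_connected W F -> f \in F -> delta E S :&: F != [set f].
Proof.
case/is_subgraphP=> sFE sW [_ nbF] fF; apply/eqP => dS.
case/negP: (nbF f fF); apply: (is_bridgeH_delta (S := S)) => //.
  exact: pair_edgesS sFE edges_pairs.
by rewrite (delta_restrict _ sFE).
Qed.

Lemma two_edge_connected_nonbridges W F : is_subgraph e W F ->
  two_edge_connected W F -> F \subset nonbridges E.
Proof.
move=> sub tec; apply/subsetP => f fF.
have fE : f \in E by case/is_subgraphP: sub => /subsetP sFE _; apply: sFE.
apply/nonbridgesP; split=> // S dS; case/eqP: (two_edge_connected_delta S sub tec fF).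
by rewrite dS; apply/setIidPl; rewrite sub1set.
Qed.

Lemma two_edge_connected_class W F C f g : is_subgraph e W F ->
  two_edge_connected W F -> C \in CP e -> f \in C -> g \in C -> f \in F -> g \in F.
Proof.
move=> sub tec CC fC gC fF; have [<-|fg] := eqVneq f g; first by [].
have [_ _ pwC] := CP_class CC; have /coparallelP[_ _ _ [S dS]] := pwC f g fC gC fg.
apply: contraTT (two_edge_connected_delta S sub tec fF) => gF; rewrite negbK; apply/eqP.
apply/setP => x; rewrite dS !inE.
by have [->|xf] := eqVneq x f; [rewrite fF | have [->|] := eqVneq x g; rewrite ?(negbTE gF)].
Qed.

End CoparallelClasses.

Lemma free_spanning_subset (K : fieldType) (vT : vectType K) (S : seq vT) :
  exists T, [/\ free T, {subset T <= S} & (<<T>> = <<S>>)%VS].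
Proof.
elim: S => [|v S [T [fT sTS eT]]]; first by exists [::]; rewrite nil_free.
have [vS|vS] := boolP (v \in <<S>>%VS).
  exists T; split=> // [x /sTS xS|]; first by rewrite inE xS orbT.
  by rewrite span_cons eT; apply/esym/addv_idPr; rewrite -memvE.
exists (v :: T); split; first by rewrite free_cons eT vS.
  by move=> x; rewrite !inE => /orP[->|/sTS ->]; rewrite ?orbT.
by rewrite !span_cons eT.
Qed.

Section AffineIndependence.
Variables (R : realFieldType) (V : finType).
Local Open Scope ring_scope.
Local Notation vec := {ffun {set V} -> R^o}.

Lemma aff_indep_cons0 n (p : n.-tuple vec) : free p ->
  aff_indep (fun i : 'I_n.+1 => if unlift ord0 i is Some j then p`_j else 0).
Proof.
move=> /freeP fp lam; rewrite big_ord_recl => sum0.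
rewrite big_ord_recl unlift_none scaler0 add0r => comb0.
have lamS : forall j, lam (lift ord0 j) = 0.
  by apply: fp; rewrite -[RHS]comb0; apply: eq_bigr => j _; rewrite liftK.
move=> i; case: (unliftP ord0 i) => [j ->|->]; first exact: lamS.
by rewrite -[RHS]sum0 big1 ?addr0.
Qed.

Lemma aff_indep_in_span (S : seq vec) k : (k <= \dim <<S>>)%N ->
  exists p : 'I_k.+1 -> vec, aff_indep p /\ forall i, p i = 0 \/ p i \in S.
Proof.
move=> leSk; have [T [fT sTS eT]] := free_spanning_subset S.
have leTk : (k <= size T)%N by rewrite -(eqP fT) eT.
have fTk : free (take k T) by apply: (@catl_free _ _ (drop k T)); rewrite cat_take_drop.
have sTk : size (take k T) == k by rewrite size_takel.
exists (fun i => if unlift ord0 i is Some j then (Tuple sTk)`_j else 0).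
split; first exact: (aff_indep_cons0 (p := Tuple sTk)).
move=> i; case: unlift => [j|]; [right | by left].
by apply/sTS/(mem_take (n0 := k))/mem_nth; rewrite (eqP sTk).
Qed.

Lemma aff_indep_dim (U : {vspace vec}) m (p : 'I_m -> vec) :
  aff_indep p -> (forall i, p i \in U) -> (m <= (\dim U).+1)%N.
Proof.
case: m p => // n p ap pU; rewrite ltnS.
pose q := [tuple p (lift ord0 j) - p ord0 | j < n].
have fq : free q.
  apply/freeP => k comb0 j.
  pose lam i := if unlift ord0 i is Some l then k l else - \sum_l k l.
  have lamS (l : 'I_n) : lam (lift ord0 l) = k l by rewrite /lam liftK.
  have lam0 : lam ord0 = - \sum_l k l by rewrite /lam unlift_none.
  have sum0 : \sum_i lam i = 0.
    by rewrite big_ord_recl lam0 (eq_bigr _ (fun l _ => lamS l)) addNr.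
  have comb : \sum_i lam i *: p i = 0.
    rewrite big_ord_recl lam0 (eq_bigr _ (fun l _ => congr1 (fun c => c *: _) (lamS l))).
    have qE : \sum_(l < n) k l *: q`_l
        = \sum_(l < n) k l *: p (lift ord0 l) - (\sum_l k l) *: p ord0.
      by under eq_bigr do rewrite nth_mktuple scalerBr; rewrite sumrB -scaler_suml.
    by rewrite scaleNr addrC -qE.
  by rewrite -lamS (ap lam sum0 comb).
have qU : (<<q>> <= U)%VS.
  by apply/span_subvP => _ /mapP[j _ ->]; rewrite memvB.
by rewrite -[n](size_tuple q) -(eqP fq) dimvS.
Qed.

Lemma incidenceD (A B : {set {set V}}) : B \subset A ->
  incidence R (A :\: B) = incidence R A - incidence R B.
Proof.
move=> /subsetP sBA; apply/ffunP => f; rewrite !ffunE inE.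
by case: (boolP (f \in B)) => [/sBA ->|_] /=; rewrite ?subrr ?subr0.
Qed.

Lemma free_incidence_trivIset (P : {set {set {set V}}}) :
  trivIset P -> set0 \notin P -> free [seq incidence R C | C <- enum P].
Proof.
move=> /trivIsetP tP P0; apply/freeP => k comb0 i.
pose B j := nth set0 (enum P) j.
have BP (j : 'I_#|P|) : B j \in P by rewrite -mem_enum mem_nth // -cardE.
have nthE (j : 'I_#|P|) : [seq incidence R C | C <- enum P]`_j = incidence R (B j).
  by rewrite (nth_map set0) // -cardE.
have [f fB] : exists f, f \in B i by apply/set0Pn; apply: contraNneq P0 => <-.
have := congr1 (fun x : vec => x f) comb0; rewrite sum_ffunE ffunE (bigD1 i) //=.
rewrite big1 => [|j ji]; rewrite ffunE nthE ffunE.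
  by rewrite fB addr0 => /eqP; rewrite scaler_eq0 oner_eq0 orbF => /eqP.
have BiBj : B i != B j.
  apply: contraNneq ji => /(congr1 (index ^~ (enum P))).
  by rewrite !index_uniq ?enum_uniq -?cardE // => /val_inj->.
by rewrite (disjointFr (tP _ _ (BP i) (BP j) BiBj) fB) scaler0.
Qed.

End AffineIndependence.

Section Polytope.
Variables (R : realFieldType) (V : finType) (e : rel V).
Hypothesis e_irr : irreflexive e.
Local Open Scope ring_scope.
Local Notation E := (edges e).
Local Notation vec := {ffun {set V} -> R^o}.
Implicit Types (C F X : {set {set V}}) (f g : {set V}) (W : {set V}).

Lemma conv_mem (P : vec -> Prop) x : P x -> conv P x.
Proof.
move=> Px; exists 1%N, (fun _ => x), (fun _ => 1).
by split; rewrite ?big_ord1 ?scale1r // => _; apply: ler01.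
Qed.

Lemma tecs_point0 : tecs_point e (0 : vec).
Proof.
exists set0, set0; split.
- by apply/is_subgraphP; split=> [|f]; rewrite ?sub0set ?inE.
- by split=> [x y|f]; rewrite inE.
- by apply/ffunP => f; rewrite !ffunE inE.
Qed.

Definition class_span : {vspace vec} :=
  <<[seq incidence R C | C <- enum (CP e)]>>%VS.

Lemma dim_class_span : (\dim class_span <= #|CP e|)%N.
Proof. by rewrite (leq_trans (dim_span _)) // size_map -cardE. Qed.

Lemma incidence_two_edge_connected W F : is_subgraph e W F ->
  two_edge_connected W F -> incidence R F = \sum_(C in CP e | C \subset F) incidence R C.
Proof.
move=> sub tec; have sFN := two_edge_connected_nonbridges e_irr sub tec.
have partCP := CP_partition e_irr.
apply/ffunP => f; rewrite sum_ffunE ffunE.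
have [fF|fF] := boolP (f \in F); last first.
  rewrite big1 // => C /andP[_ /subsetP sCF]; rewrite ffunE.
  by case: ifP => // /sCF; rewrite (negbTE fF).
have fcov : f \in cover (CP e) by rewrite (cover_partition partCP) (subsetP sFN).
set C0 := pblock (CP e) f.
have C0CP : C0 \in CP e := pblock_mem fcov.
have fC0 : f \in C0 by rewrite mem_pblock.
have sC0F : C0 \subset F.
  by apply/subsetP => g gC0; apply: (two_edge_connected_class e_irr sub tec C0CP fC0 gC0 fF).
rewrite (bigD1 C0) ?C0CP ?sC0F //= ffunE fC0 big1 ?addr0 // => C /andP[/andP[CCP _] CC0].
rewrite ffunE; case: ifP => // fC; case/eqP: CC0.
by rewrite /C0 (def_pblock (partition_trivIset partCP) CCP fC).
Qed.

Lemma TECSP_class_span x : TECSP e x -> x \in class_span.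
Proof.
case=> n [p [lam [tp _ _ ->]]]; apply: memv_suml => i _; apply: memvZ.
have [W [F [sub tec ->]]] := tp i; rewrite (incidence_two_edge_connected sub tec).
by apply: memv_suml => C /andP[CCP _]; apply/memv_span/map_f; rewrite mem_enum.
Qed.

Definition two_edge_connectedb W F :=
  [forall x in W, forall y in W, connect (fun a b => [set a; b] \in F) x y] &&
  [forall f in F, ~~ is_bridgeH W F f].

Lemma two_edge_connectedP W F : reflect (two_edge_connected W F) (two_edge_connectedb W F).
Proof.
apply: (iffP andP) => [[/forall_inP cW /forall_inP nbF]|[cW nbF]]; split.
- by move=> x y xW yW; move/forall_inP: (cW x xW); apply.
- exact: nbF.
- by apply/forall_inP => x xW; apply/forall_inP => y yW; apply: cW.
- exact/forall_inP.
Qed.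

Definition tecs_points : seq vec :=
  [seq incidence R F | F <- enum [set F | [exists W,
                                 is_subgraph e W F && two_edge_connectedb W F]]].

Lemma tecs_pointsP x : x \in tecs_points -> tecs_point e x.
Proof.
case/mapP => F; rewrite mem_enum inE => /existsP[W /andP[sub /two_edge_connectedP tec]] ->.
by exists W, F.
Qed.

Lemma incidence_nonbridges X : pair_edges X -> incidence R (nonbridges X) =
  \sum_(K in [set component X x | x : V]) incidence R (component_edges X K).
Proof.
move=> pX; apply/ffunP => f; rewrite sum_ffunE ffunE.
have [fN|fN] := boolP (f \in nonbridges X); last first.
  by rewrite big1 // => K _; rewrite ffunE inE (negbTE fN).
have [a af] : exists a, a \in f.
  by apply/set0Pn; rewrite -card_gt0 (eqP (pX f (subsetP (nonbridges_sub X) f fN))).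
have sfK := component_nonbridge pX fN af (component_refl X a).
rewrite (bigD1 (component X a)) ?imset_f //= ffunE inE fN sfK big1 ?addr0 //.
move=> _ /andP[/imsetP[x _ ->] Kx]; rewrite ffunE inE fN /=.
by case: ifP => // /subsetP/(_ a af)/component_eq eqK; rewrite eqK eqxx in Kx.
Qed.

Lemma incidence_nonbridges_span X : X \subset E ->
  incidence R (nonbridges X) \in <<tecs_points>>%VS.
Proof.
move=> sXE; have pX : pair_edges X := pair_edgesS sXE (edges_pairs e_irr).
rewrite incidence_nonbridges //; apply: memv_suml => _ /imsetP[x _ ->].
apply/memv_span/map_f; rewrite mem_enum inE; apply/existsP; exists (component X x).
apply/andP; split.
  apply/is_subgraphP; split=> [|f]; last by rewrite inE => /andP[].
  by apply/subsetP => f /setIdP[/(subsetP (nonbridges_sub X)) /(subsetP sXE)].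
apply/two_edge_connectedP; split; first exact: component_edges_connected.
exact: component_edges_bridgeless.
Qed.

Lemma incidence_class_span C : C \in CP e -> incidence R C \in <<tecs_points>>%VS.
Proof.
move=> CC; have [_ sCN _] := CP_class e_irr CC.
have -> : incidence R C =
    incidence R (nonbridges E) - incidence R (nonbridges (E :\: C)).
  by rewrite nonbridges_setD_class // incidenceD // opprB addrC subrK.
by apply: memvB; apply: incidence_nonbridges_span; rewrite ?subsetDl.
Qed.

Lemma dim_tecs_points : (#|CP e| <= \dim <<tecs_points>>)%N.
Proof.
have partCP := CP_partition e_irr.
have := free_incidence_trivIset R (partition_trivIset partCP) (negbT (partition0 partCP)).
rewrite /free size_map => /eqP dimC; rewrite cardE -dimC.
apply/dimvS/span_subvP => x /mapP[C]; rewrite mem_enum => CC ->.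
exact: incidence_class_span.
Qed.

End Polytope.

Theorem mainTheorem1 (R : realFieldType) (V : finType) (e : rel V)
  (e_sym : symmetric e) (e_irr : irreflexive e) :
  has_dim (@TECSP R V e) #|CP e|.
Proof.
split.
  have [p [ap pts]] := aff_indep_in_span (dim_tecs_points R e_irr).
  exists p; split=> // i; apply: conv_mem.
  by case: (pts i) => [->|/tecs_pointsP //]; apply: tecs_point0.
move=> m p ap inP; apply: leq_trans (aff_indep_dim ap _) _.
  by move=> i; apply: TECSP_class_span e_irr _ (inP i).
by rewrite ltnS dim_class_span.
Qed.
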